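(* Let $h,p,K>0$ and define $H(x)=h\max(x,0)+p\max(-x,0)$ and $\delta(u)=1$ if $u>0$, $\delta(u)=0$ if $u=0$. Fix an initial inventory level $x_0\in\mathbb{R}$, a horizon $N\ge1$ and a demand sample path $\omega=(d_1,\dots,d_N)$ of nonnegative demands. For order quantities $u_1\ge 0$ define \[J_N(u_1,\omega)=H(x_1)+K\delta(u_1)+\min_{u_2,\dots,u_N\ge 0}\sum_{i=2}^N\big(H(x_i)+K\delta(u_i)\big),\] where $x_i=x_{i-1}-d_i+u_i$ for $i=1,\dots,N$. Then $J_N(u_1,\omega)$ is $K$-convex in $u_1$ on $u_1>0$, i.e. for all $0<u_1<u_1'<u_1''$, \[K+J_N(u_1'',\omega)\ge J_N(u_1',\omega)+\frac{u_1''-u_1'}{u_1'-u_1}\big(J_N(u_1',\omega)-J_N(u_1,\omega)\big).\]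
   Context: This is a periodic-review inventory model with fixed setup cost $K$ per order, holding cost rate $h$, backlog penalty rate $p$, full backlogging; $x_i$ is the inventory level at the end of period $i$, $u_i$ the order quantity placed at the beginning of period $i$, $d_i$ the demand in period $i$. *)

From Stdlib Require Import Reals List Arith.
From Coquelicot Require Import Coquelicot.
Open Scope R_scope.

Definition Hcost (h p x : R) : R := h * Rmax x 0 + p * Rmax (- x) 0.

(* delta(u) = 1 if u > 0, 0 otherwise (only used for u >= 0) *)
Definition delta (u : R) : R := if Rlt_dec 0 u then 1 else 0.

Fixpoint traj (x0 : R) (d u : nat -> R) (i : nat) : R :=
  match i with
  | O => x0
  | S k => traj x0 d u k - d (S k) + u (S k)
  end.

Definition ctrl (u1 : R) (v : nat -> R) (i : nat) : R :=
  if Nat.eqb i 1 then u1 else v i.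

Definition tail_cost (h p K x0 : R) (d : nat -> R) (N : nat) (u : nat -> R) : R :=
  fold_right Rplus 0
    (map (fun i => Hcost h p (traj x0 d u i) + K * delta (u i)) (seq 2 (N - 1))).

(* J_N(u1, omega) = H(x1) + K delta(u1) + min_{u2..uN >= 0} tail cost.
   The minimum is taken as the infimum (Glb_Rbar) over feasible tails. *)
Definition JN (h p K x0 : R) (d : nat -> R) (N : nat) (u1 : R) : R :=
  Hcost h p (traj x0 d (ctrl u1 (fun _ => 0)) 1) + K * delta u1
  + real (Glb_Rbar (fun c => exists v : nat -> R,
        (forall i, (2 <= i <= N)%nat -> 0 <= v i) /\
        c = tail_cost h p K x0 d N (ctrl u1 v))).

From Stdlib Require Import Reals List Lra Lia Classical.
From Coquelicot Require Import Coquelicot.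
Open Scope R_scope.

(* Work with the correspondence relating an inventory level to the costs
   attainable from it, and call it K-convex when, up to any [eps > 0], each
   three-point K-convexity inequality between attainable costs at [a < b < c] is
   met by some attainable cost at [b]; this avoids proving that minima are
   attained. Adding the convex holding/backlog cost and shifting by a demand
   preserve the property, and so does optimising the order: from [b] one either
   orders up to the level reached from [c] (paying [K]), orders up to the level
   reached from [a], or orders nothing and interpolates between those two
   levels. By induction the costs of periods [2..N] form such a correspondence,
   and the infimum of a K-convex correspondence is K-convex. *)

Lemma delta_bounds u : 0 <= delta u <= 1.
Proof. unfold delta; destruct (Rlt_dec 0 u); lra. Qed.

Lemma delta_pos u : 0 < u -> delta u = 1.
Proof. unfold delta; destruct (Rlt_dec 0 u); lra. Qed.

Lemma delta_0 : delta 0 = 0.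
Proof. unfold delta; destruct (Rlt_dec 0 0); lra. Qed.

Lemma Rmax0_three_point a b c : a < b -> b < c ->
  (c - a) * Rmax b 0 <= (c - b) * Rmax a 0 + (b - a) * Rmax c 0.
Proof.
  intros; unfold Rmax;
  destruct (Rle_dec b 0); destruct (Rle_dec a 0); destruct (Rle_dec c 0); nra.
Qed.

Lemma Hcost_three_point h p a b c : 0 <= h -> 0 <= p -> a < b -> b < c ->
  (c - a) * Hcost h p b <= (c - b) * Hcost h p a + (b - a) * Hcost h p c.
Proof.
  intros Hh Hp Hab Hbc; unfold Hcost.
  pose proof (Rmax0_three_point a b c Hab Hbc).
  pose proof (Rmax0_three_point (- c) (- b) (- a) ltac:(lra) ltac:(lra)).
  nra.
Qed.

Lemma Hcost_nonneg h p x : 0 <= h -> 0 <= p -> 0 <= Hcost h p x.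
Proof.
  intros; unfold Hcost.
  pose proof (Rmax_r x 0); pose proof (Rmax_r (- x) 0); nra.
Qed.

Lemma three_point_below_both K a b c A B C : a < b -> b < c ->
  B <= A -> B <= K + C -> (c - a) * B <= (c - b) * A + (b - a) * (K + C).
Proof. intros; nra. Qed.

(* [b] splits [a + u, c + u'] with weight at least (c - b)/(c - a) on the left
   end, and moving weight to the left only helps since [A <= K + pc]. *)
Lemma three_point_interpolation K a b c u u' pa pc pb A C eps :
  0 <= u -> 0 <= u' -> a + u < b -> b < c -> pa <= A -> pc <= C -> A <= K + pc ->
  (c + u' - (a + u)) * pb
    <= (c + u' - b) * pa + (b - (a + u)) * (K + pc) + eps * (c + u' - (a + u)) / (c - a) ->
  (c - a) * pb <= (c - b) * A + (b - a) * (K + C) + eps.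
Proof.
  intros Hu Hu' Hab Hbc HA HC HAK Hpb.
  set (D := c + u' - (a + u)) in *.
  assert (HD : 0 < D) by (unfold D; lra).
  apply (Rmult_le_reg_l D); [exact HD|].
  assert (Hweight : D * (c - b) <= (c - a) * (c + u' - b)) by (unfold D; nra).
  assert (Heps : (c - a) * (eps * D / (c - a)) = D * eps) by (field; lra).
  assert (Hpb' : (c - a) * (D * pb)
                 <= (c - a) * ((c + u' - b) * pa + (b - (a + u)) * (K + pc)) + D * eps).
  { rewrite <- Heps, <- Rmult_plus_distr_l. apply Rmult_le_compat_l; lra. }
  assert ((c - a) * (c + u' - b) * pa <= (c - a) * (c + u' - b) * A)
    by (apply Rmult_le_compat_l; nra).
  assert (((c - a) * (c + u' - b) - D * (c - b)) * A
          <= ((c - a) * (c + u' - b) - D * (c - b)) * (K + pc))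
    by (apply Rmult_le_compat_l; lra).
  assert (D * (b - a) * (K + pc) <= D * (b - a) * (K + C))
    by (apply Rmult_le_compat_l; nra).
  unfold D in *; lra.
Qed.

Definition approx_Kconvex (K : R) (F : R -> R -> Prop) : Prop :=
  forall a b c A C eps, a < b -> b < c -> 0 < eps -> F a A -> F c C ->
  exists B, F b B /\ (c - a) * B <= (c - b) * A + (b - a) * (K + C) + eps.

Definition add_holding (h p : R) (F : R -> R -> Prop) (y c : R) : Prop :=
  exists c', F y c' /\ c = Hcost h p y + c'.

Definition demand_shift (e : R) (F : R -> R -> Prop) (y c : R) : Prop := F (y - e) c.

Definition order_step (K : R) (F : R -> R -> Prop) (y c : R) : Prop :=
  exists u c', 0 <= u /\ F (y + u) c' /\ c = K * delta u + c'.

Lemma approx_Kconvex_ext K (F G : R -> R -> Prop) :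
  (forall y c, F y c <-> G y c) -> approx_Kconvex K F -> approx_Kconvex K G.
Proof.
  intros E HF a b c A C eps Hab Hbc He HA HC.
  apply E in HA; apply E in HC.
  destruct (HF a b c A C eps Hab Hbc He HA HC) as [B [HB HB']].
  exists B; split; [apply E|]; assumption.
Qed.

Lemma approx_Kconvex_add_holding K h p F : 0 <= h -> 0 <= p ->
  approx_Kconvex K F -> approx_Kconvex K (add_holding h p F).
Proof.
  intros Hh Hp HF a b c A C eps Hab Hbc He [ca [Ha ->]] [cc [Hc ->]].
  destruct (HF a b c ca cc eps Hab Hbc He Ha Hc) as [cb [Hb Hb']].
  exists (Hcost h p b + cb); split; [exists cb; split; auto|].
  pose proof (Hcost_three_point h p a b c Hh Hp Hab Hbc); nra.
Qed.

Lemma approx_Kconvex_demand_shift K e F :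
  approx_Kconvex K F -> approx_Kconvex K (demand_shift e F).
Proof.
  unfold demand_shift; intros HF a b c A C eps Hab Hbc He HA HC.
  destruct (HF (a - e) (b - e) (c - e) A C eps ltac:(lra) ltac:(lra) He HA HC)
    as [B [HB HB']].
  exists B; split; [exact HB | nra].
Qed.

Lemma approx_Kconvex_order_step K F : 0 <= K ->
  approx_Kconvex K F -> approx_Kconvex K (order_step K F).
Proof.
  intros HK HF a b c A C eps Hab Hbc He [u [pa [Hu [Ha HA]]]] [u' [pc [Hu' [Hc HC]]]].
  pose proof (delta_bounds u); pose proof (delta_bounds u').
  assert (HpaA : pa <= A) by nra.
  assert (HpcC : pc <= C) by nra.
  destruct (Rlt_or_le A (K + pc)) as [HAK|HAK].
  2:{ exists (K + pc); split.
      - exists (c + u' - b), pc; split; [lra|]; split.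
        + replace (b + (c + u' - b)) with (c + u') by ring; exact Hc.
        + rewrite delta_pos by lra; ring.
      - pose proof (three_point_below_both K a b c A (K + pc) C Hab Hbc). lra. }
  destruct (Rle_or_lt b (a + u)) as [Hreuse|Hskip].
  - exists (K * delta (a + u - b) + pa); split.
    + exists (a + u - b), pa; split; [lra|]; split; [|reflexivity].
      replace (b + (a + u - b)) with (a + u) by ring; exact Ha.
    + assert (delta u = 1) by (apply delta_pos; lra).
      pose proof (delta_bounds (a + u - b)).
      assert (K * delta (a + u - b) + pa <= A) by nra.
      pose proof (three_point_below_both K a b c A (K * delta (a + u - b) + pa) C
                    Hab Hbc ltac:(lra) ltac:(lra)).
      lra.
  - destruct (HF (a + u) b (c + u') pa pc (eps * (c + u' - (a + u)) / (c - a))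
                 Hskip ltac:(lra) ltac:(apply Rdiv_lt_0_compat; nra) Ha Hc)
      as [pb [Hb Hpb]].
    exists pb; split.
    + exists 0, pb; split; [lra|]; split.
      * rewrite Rplus_0_r; exact Hb.
      * rewrite delta_0; ring.
    + apply (three_point_interpolation K a b c u u' pa pc pb A C eps); lra.
Qed.

Lemma approx_Kconvex_inf K F (g : R -> R) : approx_Kconvex K F ->
  (forall y c, F y c -> g y <= c) ->
  (forall y eps, 0 < eps -> exists c, F y c /\ c < g y + eps) ->
  forall a b c, a < b -> b < c -> (c - a) * g b <= (c - b) * g a + (b - a) * (K + g c).
Proof.
  intros HF Hlow Happrox a b c Hab Hbc.
  apply Rle_plus_epsilon; intros eps He.
  set (eps' := eps / (c - a + 1)).
  assert (He' : 0 < eps') by (apply Rdiv_lt_0_compat; lra).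
  destruct (Happrox a eps' He') as [A [HA HA']].
  destruct (Happrox c eps' He') as [C [HC HC']].
  destruct (HF a b c A C eps' Hab Hbc He' HA HC) as [B [HB HB']].
  pose proof (Hlow b B HB).
  assert (eps' * (c - a + 1) = eps) by (unfold eps'; field; lra).
  nra.
Qed.

Lemma Glb_Rbar_real_spec (E : R -> Prop) m : (exists x, E x) -> (forall x, E x -> m <= x) ->
  (forall x, E x -> real (Glb_Rbar E) <= x) /\
  (forall eps, 0 < eps -> exists x, E x /\ x < real (Glb_Rbar E) + eps).
Proof.
  intros [x0 Hx0] Hm.
  destruct (Glb_Rbar_correct E) as [Hlb Hgr].
  destruct (Glb_Rbar E) as [l| |]; simpl in *.
  - split; [exact Hlb|].
    intros eps He; apply NNPP; intros Hnone.
    assert (Hle : Rbar_le (l + eps) l).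
    { apply Hgr; intros x Hx; simpl.
      apply Rnot_lt_le; intros Hlt; apply Hnone; exists x; split; assumption. }
    simpl in Hle; lra.
  - exfalso; exact (Hlb x0 Hx0).
  - exfalso; apply (Hgr m); intros x Hx; exact (Hm x Hx).
Qed.

(* [cost h p K d v k n y]: cost of periods [k+1 .. k+n] with orders [v],
   starting from inventory level [y] at the end of period [k]. *)
Fixpoint cost (h p K : R) (d v : nat -> R) (k n : nat) (y : R) {struct n} : R :=
  match n with
  | O => 0
  | S n' => Hcost h p (y - d (S k) + v (S k)) + K * delta (v (S k))
            + cost h p K d v (S k) n' (y - d (S k) + v (S k))
  end.

Definition attainable (h p K : R) (d : nat -> R) (k n : nat) (y c : R) : Prop :=
  exists v, (forall j, (k < j <= k + n)%nat -> 0 <= v j) /\ c = cost h p K d v k n y.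

Lemma cost_ext h p K d n : forall k y v v',
  (forall j, (k < j <= k + n)%nat -> v j = v' j) ->
  cost h p K d v k n y = cost h p K d v' k n y.
Proof.
  induction n as [|n IH]; intros k y v v' E; simpl; [reflexivity|].
  rewrite (E (S k)) by lia.
  rewrite (IH (S k) _ v v') by (intros; apply E; lia).
  reflexivity.
Qed.

Lemma cost_nonneg h p K d n : 0 <= h -> 0 <= p -> 0 <= K -> forall k y v,
  (forall j, (k < j <= k + n)%nat -> 0 <= v j) -> 0 <= cost h p K d v k n y.
Proof.
  intros Hh Hp HK; induction n as [|n IH]; intros k y v Hv; simpl; [lra|].
  pose proof (IH (S k) (y - d (S k) + v (S k)) v ltac:(intros; apply Hv; lia)).
  pose proof (delta_bounds (v (S k))).
  pose proof (Hcost_nonneg h p (y - d (S k) + v (S k)) Hh Hp).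
  nra.
Qed.

Lemma attainable_0 h p K d k y c : attainable h p K d k 0 y c <-> c = 0.
Proof.
  split.
  - intros [v [_ ->]]; reflexivity.
  - intros ->; exists (fun _ => 0); split; [intros; lra | reflexivity].
Qed.

Lemma attainable_S h p K d k n y c :
  attainable h p K d k (S n) y c <->
  order_step K (demand_shift (d (S k)) (add_holding h p (attainable h p K d (S k) n))) y c.
Proof.
  unfold demand_shift; split.
  - intros [v [Hv ->]].
    set (y1 := y - d (S k) + v (S k)).
    exists (v (S k)), (Hcost h p y1 + cost h p K d v (S k) n y1).
    split; [apply Hv; lia|]; split.
    + replace (y + v (S k) - d (S k)) with y1 by (unfold y1; ring).
      exists (cost h p K d v (S k) n y1); split; [|reflexivity].
      exists v; split; [intros; apply Hv; lia | reflexivity].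
    + simpl; fold y1; ring.
  - intros [u [c' [Hu [[c'' [[v [Hv ->]] ->]] ->]]]].
    set (w := fun j => if Nat.eqb j (S k) then u else v j).
    assert (Hwv : forall j, (S k < j <= S k + n)%nat -> w j = v j).
    { intros j Hj; unfold w; replace (Nat.eqb j (S k)) with false; [reflexivity|].
      symmetry; apply Nat.eqb_neq; lia. }
    exists w; split.
    + intros j Hj; unfold w; destruct (Nat.eqb_spec j (S k)); [assumption|].
      apply Hv; lia.
    + assert (Hwk : w (S k) = u) by (unfold w; rewrite Nat.eqb_refl; reflexivity).
      simpl; rewrite Hwk, (cost_ext h p K d n (S k) _ w v Hwv).
      replace (y - d (S k) + u) with (y + u - d (S k)) by ring; ring.
Qed.

Lemma attainable_approx_Kconvex h p K d n : 0 <= h -> 0 <= p -> 0 <= K ->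
  forall k, approx_Kconvex K (attainable h p K d k n).
Proof.
  intros Hh Hp HK; induction n as [|n IH]; intros k.
  - eapply approx_Kconvex_ext; [intros y c; symmetry; apply attainable_0|].
    intros a b c A C eps Hab Hbc He -> ->; exists 0; split; [reflexivity | nra].
  - eapply approx_Kconvex_ext; [intros y c; symmetry; apply attainable_S|].
    apply approx_Kconvex_order_step, approx_Kconvex_demand_shift,
      approx_Kconvex_add_holding; auto.
Qed.

Lemma tail_sum_cost h p K x0 d u n : forall k,
  fold_right Rplus 0
    (map (fun i => Hcost h p (traj x0 d u i) + K * delta (u i)) (seq (S k) n))
  = cost h p K d u k n (traj x0 d u k).
Proof.
  induction n as [|n IH]; intros k; [reflexivity|].
  cbn [seq map fold_right cost]; rewrite IH; reflexivity.
Qed.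

Lemma feasible_tails_attainable h p K x0 d N u1 c : (1 <= N)%nat ->
  (exists v, (forall i, (2 <= i <= N)%nat -> 0 <= v i) /\
             c = tail_cost h p K x0 d N (ctrl u1 v)) <->
  attainable h p K d 1 (N - 1) (x0 - d 1%nat + u1) c.
Proof.
  intros HN; unfold tail_cost.
  assert (Hctrl : forall v j, (1 < j)%nat -> ctrl u1 v j = v j).
  { intros v j Hj; unfold ctrl; replace (Nat.eqb j 1) with false; [reflexivity|].
    symmetry; apply Nat.eqb_neq; lia. }
  split.
  - intros [v [Hv ->]]; exists (ctrl u1 v); split.
    + intros j Hj; rewrite Hctrl by lia; apply Hv; lia.
    + apply (tail_sum_cost h p K x0 d (ctrl u1 v) (N - 1) 1).
  - intros [w [Hw ->]]; exists w; split.
    + intros i Hi; apply Hw; lia.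
    + rewrite (tail_sum_cost h p K x0 d (ctrl u1 w) (N - 1) 1).
      apply cost_ext; intros j Hj; symmetry; apply Hctrl; lia.
Qed.

Definition level_value (h p K : R) (d : nat -> R) (N : nat) (y : R) : R :=
  Hcost h p y + real (Glb_Rbar (attainable h p K d 1 (N - 1) y)).

Lemma JN_level_value h p K x0 d N u : (1 <= N)%nat -> 0 < u ->
  JN h p K x0 d N u = level_value h p K d N (x0 - d 1%nat + u) + K.
Proof.
  intros HN Hu; unfold JN, level_value.
  rewrite (Glb_Rbar_eqset _ _ (fun c => feasible_tails_attainable h p K x0 d N u c HN)).
  change (traj x0 d (ctrl u (fun _ => 0)) 1) with (x0 - d 1%nat + u).
  rewrite delta_pos by exact Hu; ring.
Qed.

Lemma attainable_Glb_spec h p K d k n y : 0 <= h -> 0 <= p -> 0 <= K ->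
  (forall c, attainable h p K d k n y c -> real (Glb_Rbar (attainable h p K d k n y)) <= c) /\
  (forall eps, 0 < eps -> exists c,
     attainable h p K d k n y c /\ c < real (Glb_Rbar (attainable h p K d k n y)) + eps).
Proof.
  intros Hh Hp HK; apply (Glb_Rbar_real_spec _ 0).
  - exists (cost h p K d (fun _ => 0) k n y), (fun _ => 0); split; [intros; lra | reflexivity].
  - intros c [v [Hv ->]]; apply cost_nonneg; auto.
Qed.

Lemma level_value_spec h p K d N : 0 <= h -> 0 <= p -> 0 <= K ->
  (forall y c, add_holding h p (attainable h p K d 1 (N - 1)) y c ->
     level_value h p K d N y <= c) /\
  (forall y eps, 0 < eps -> exists c,
     add_holding h p (attainable h p K d 1 (N - 1)) y c /\ c < level_value h p K d N y + eps).
Proof.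
  intros Hh Hp HK; unfold level_value; split.
  - intros y c [c' [Hc' ->]].
    destruct (attainable_Glb_spec h p K d 1 (N - 1) y Hh Hp HK) as [Hlow _].
    apply Rplus_le_compat_l, Hlow, Hc'.
  - intros y eps He.
    destruct (attainable_Glb_spec h p K d 1 (N - 1) y Hh Hp HK) as [_ Happrox].
    destruct (Happrox eps He) as [c [Hc Hc']].
    exists (Hcost h p y + c); split; [exists c; split; auto | lra].
Qed.

Lemma Kconvex_slope_of_three_point K a b c Ja Jb Jc : a < b -> b < c ->
  (c - a) * Jb <= (c - b) * Ja + (b - a) * (K + Jc) ->
  K + Jc >= Jb + (c - b) / (b - a) * (Jb - Ja).
Proof.
  intros Hab Hbc H3; apply Rle_ge.
  apply (Rmult_le_reg_l (b - a)); [lra|].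
  replace ((b - a) * (Jb + (c - b) / (b - a) * (Jb - Ja)))
    with ((b - a) * Jb + (c - b) * (Jb - Ja)) by (field; lra).
  lra.
Qed.

Theorem lemma1 (h p K x0 : R) (N : nat) (d : nat -> R)
  (hh : 0 < h) (hp : 0 < p) (hK : 0 < K) (hN : (1 <= N)%nat)
  (hd : forall i, (1 <= i <= N)%nat -> 0 <= d i)
  (u1 u1' u1'' : R) (h1 : 0 < u1) (h12 : u1 < u1') (h23 : u1' < u1'') :
  K + JN h p K x0 d N u1'' >=
  JN h p K x0 d N u1'
  + (u1'' - u1') / (u1' - u1) * (JN h p K x0 d N u1' - JN h p K x0 d N u1).
Proof.
  rewrite !JN_level_value by (auto; lra).
  set (g := level_value h p K d N).
  set (s := x0 - d 1%nat).
  destruct (level_value_spec h p K d N ltac:(lra) ltac:(lra) ltac:(lra)) as [Hlow Happrox].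
  pose proof (approx_Kconvex_add_holding K h p _ ltac:(lra) ltac:(lra)
                (attainable_approx_Kconvex h p K d (N - 1) ltac:(lra) ltac:(lra) ltac:(lra) 1))
    as Hconv.
  pose proof (approx_Kconvex_inf K _ g Hconv Hlow Happrox (s + u1) (s + u1') (s + u1'')
                ltac:(lra) ltac:(lra)) as Hg.
  apply Kconvex_slope_of_three_point; lra.
Qed.
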